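(* Let $f(p)=1+\sum_{n\ge1}a_np^{2n}$ with $a_n\ge0$ for all $n$ and the series converging for all $p\in\mathbb R$, and set $g(s)=f(\sqrt{|s|})$. Then $g$ is convex and nondecreasing on $[0,\infty)$, $g(p^2)=f(p)$, and for every unit vector $\psi$ in the standard model with $\psi\in C_c^\infty((-k_{\max},k_{\max}))$, $$\Delta_\psi\mathbf x\,\Delta_\psi\mathbf p\ \ge\ \tfrac14\,g(\Delta_\psi\mathbf p)^2,\qquad\text{i.e.}\qquad \Delta_\psi\mathbf x\ge\frac{f(\sqrt{\Delta_\psi\mathbf p})^2}{4\Delta_\psi\mathbf p}.$$
   Context: Standard model: $k_{\max}=\int_0^\infty dp/f(p)\in(0,\infty]$, $p(k)$ the inverse of $p\mapsto\int_0^pds/f(s)$, Hilbert space $L^2([-k_{\max},k_{\max}],dk)$ (or $L^2(\mathbb R)$ if $k_{\max}=\infty$), $\mathbf x=i\,d/dk$, $\mathbf p=$ multiplication by $p(k)$, so that $[\mathbf x,\mathbf p]=if(\mathbf p)$ on such $\psi$. $\Delta_\psi A=\langle\psi,A^2\psi\rangle-\langle\psi,A\psi\rangle^2$. *)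

From Stdlib Require Import Reals Lra ClassicalEpsilon.
Open Scope R_scope.

(* Total oriented Riemann integral: the value of RiemannInt when g is
   Riemann integrable on [a,b] (independent of the integrability proof);
   an arbitrary value otherwise. *)
Definition Rint (g : R -> R) (a b : R) : R :=
  epsilon (inhabits 0)
    (fun I => exists pr : Riemann_integrable g a b, RiemannInt pr = I).

Definition gfun (f : R -> R) (s : R) : R := f (sqrt (Rabs s)).

Definition Pfun (f : R -> R) (p : R) : R := Rint (fun s => / f s) 0 p.

(* t < k_max, where k_max = int_0^oo dp/f(p) = sup_q P(q) (possibly +oo) *)
Definition lt_kmax (f : R -> R) (t : R) : Prop := exists q, t < Pfun f q.

Definition pfun (f : R -> R) (k : R) : R :=
  epsilon (inhabits 0) (fun q => Pfun f q = k).

(* C^infinity real function given with its sequence of derivatives: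
   D 0 is the function, D (S n) is the derivative of D n. *)
Definition smooth_seq (D : nat -> R -> R) : Prop :=
  forall n x, derivable_pt_lim (D n) x (D (S n) x).

(* A complex function psi = u + i v, and phi = fr + i fi; the inner product
   <psi, phi> = int conj(psi) phi over [a,b] (outside of which psi vanishes),
   split into real and imaginary parts. *)
Definition inner_re (a b : R) (u v fr fi : R -> R) : R :=
  Rint (fun k => u k * fr k + v k * fi k) a b.
Definition inner_im (a b : R) (u v fr fi : R -> R) : R :=
  Rint (fun k => u k * fi k - v k * fr k) a b.

(* Delta_psi A = <psi, A^2 psi> - <psi, A psi>^2 (real part; the quantity
   is real for the symmetric operators considered). Arguments: components
   of A psi (ar, ai) and of A^2 psi (br, bi). *)
Definition variance (a b : R) (u v ar ai br bi : R -> R) : R :=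
  inner_re a b u v br bi
  - (inner_re a b u v ar ai ^ 2 - inner_im a b u v ar ai ^ 2).

(* x = i d/dk:  x psi = i (u' + i v') = -v' + i u';  x^2 psi = -u'' - i v''. *)
Definition Delta_x (a b : R) (Du Dv : nat -> R -> R) : R :=
  variance a b (Du 0%nat) (Dv 0%nat)
    (fun k => - Dv 1%nat k) (fun k => Du 1%nat k)
    (fun k => - Du 2%nat k) (fun k => - Dv 2%nat k).

Definition Delta_p (f : R -> R) (a b : R) (u v : R -> R) : R :=
  variance a b u v
    (fun k => pfun f k * u k) (fun k => pfun f k * v k)
    (fun k => pfun f k * (pfun f k * u k)) (fun k => pfun f k * (pfun f k * v k)).

From Stdlib Require Import Reals Lra Ranalysis5 ClassicalEpsilon.
From Coquelicot Require Import Coquelicot.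
Open Scope R_scope.

(* Writing f(p) = sum_n c_n p^(2n) with c_n >= 0 (c_0 = 1), g is the power series
   G(s) = sum_n c_n s^n on [0, oo); it has nonnegative coefficients, so it lies above
   each of its tangent lines there and their slopes are nonnegative.  This gives
   convexity, monotonicity, and Jensen's inequality g(<p^2>) <= <G(p^2)> = <f(p)>.
   On the support of psi the inverse p of P(p) = int_0^p 1/f satisfies p' = f(p),
   so integrating by parts turns <[x, p]> into i <f(p)>, and Cauchy-Schwarz between
   (p - <p>) psi and (x - <x>) psi gives Delta x Delta p >= <f(p)>^2 / 4.  Finally
   Delta p <= <p^2> and g is nondecreasing, so <f(p)> >= g(Delta p) >= 1. *)

Lemma Rint_RInt (g : R -> R) (a b : R) : ex_RInt g a b -> Rint g a b = RInt g a b.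
Proof.
  intros Hg. unfold Rint.
  destruct (epsilon_spec (inhabits 0)
    (fun I => exists pr : Riemann_integrable g a b, RiemannInt pr = I)) as [pr <-].
  - exists (RiemannInt (ex_RInt_Reals_0 _ _ _ Hg)), (ex_RInt_Reals_0 _ _ _ Hg).
    reflexivity.
  - symmetry. apply RInt_Reals.
Qed.

Lemma is_RInt_lincomb2 (g1 g2 h : R -> R) (a b c1 c2 I1 I2 : R) :
  (forall x, h x = c1 * g1 x + c2 * g2 x) ->
  is_RInt g1 a b I1 -> is_RInt g2 a b I2 -> is_RInt h a b (c1 * I1 + c2 * I2).
Proof.
  intros Eh H1 H2.
  apply (is_RInt_ext (V := R_NormedModule) (fun x => c1 * g1 x + c2 * g2 x)).
  - intros x _. symmetry. apply Eh.
  - exact (is_RInt_plus _ _ _ _ _ _ (is_RInt_scal _ _ _ c1 _ H1)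
                                    (is_RInt_scal _ _ _ c2 _ H2)).
Qed.

Lemma is_RInt_lincomb3 (g1 g2 g3 h : R -> R) (a b c1 c2 c3 I1 I2 I3 : R) :
  (forall x, h x = c1 * g1 x + c2 * g2 x + c3 * g3 x) ->
  is_RInt g1 a b I1 -> is_RInt g2 a b I2 -> is_RInt g3 a b I3 ->
  is_RInt h a b (c1 * I1 + c2 * I2 + c3 * I3).
Proof.
  intros Eh H1 H2 H3.
  replace (c1 * I1 + c2 * I2 + c3 * I3) with (1 * (c1 * I1 + c2 * I2) + c3 * I3) by ring.
  apply (is_RInt_lincomb2 (fun x => c1 * g1 x + c2 * g2 x) g3); auto.
  - intros x. rewrite Eh. ring.
  - apply (is_RInt_lincomb2 g1 g2); auto.
Qed.

Lemma RInt_lincomb2 (g1 g2 h : R -> R) (a b c1 c2 : R) :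
  (forall x, h x = c1 * g1 x + c2 * g2 x) -> ex_RInt g1 a b -> ex_RInt g2 a b ->
  RInt h a b = c1 * RInt g1 a b + c2 * RInt g2 a b :> R.
Proof.
  intros Eh H1 H2. apply is_RInt_unique.
  apply (is_RInt_lincomb2 g1 g2); auto; apply (RInt_correct (V := R_CompleteNormedModule)); auto.
Qed.

Lemma RInt_lincomb3 (g1 g2 g3 h : R -> R) (a b c1 c2 c3 : R) :
  (forall x, h x = c1 * g1 x + c2 * g2 x + c3 * g3 x) ->
  ex_RInt g1 a b -> ex_RInt g2 a b -> ex_RInt g3 a b ->
  RInt h a b = c1 * RInt g1 a b + c2 * RInt g2 a b + c3 * RInt g3 a b :> R.
Proof.
  intros Eh H1 H2 H3. apply is_RInt_unique.
  apply (is_RInt_lincomb3 g1 g2 g3); auto; apply (RInt_correct (V := R_CompleteNormedModule)); auto.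
Qed.

Lemma RInt_derive_boundary (G dG : R -> R) (a b : R) : a <= b ->
  (forall x, a <= x <= b -> is_derive G x (dG x)) ->
  (forall x, a <= x <= b -> continuous dG x) ->
  RInt dG a b = G b - G a :> R.
Proof.
  intros Hab HG HdG. apply (is_RInt_unique (V := R_CompleteNormedModule)).
  apply (is_RInt_derive (V := R_CompleteNormedModule));
    intros x Hx; rewrite Rmin_left, Rmax_right in Hx by exact Hab; auto.
Qed.

Lemma quadratic_nonneg_discriminant (A B C : R) : 0 <= A ->
  (forall t, 0 <= A * t ^ 2 - 2 * B * t + C) -> B ^ 2 <= A * C.
Proof.
  intros HA Hq. destruct HA as [HA | <-].
  - specialize (Hq (B / A)).
    replace (A * (B / A) ^ 2 - 2 * B * (B / A) + C) with ((A * C - B ^ 2) / A) in Hq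
      by (field; lra).
    apply Rmult_le_compat_r with (r := A) in Hq; [|lra].
    unfold Rdiv in Hq. rewrite Rmult_assoc, Rinv_l, Rmult_1_r, Rmult_0_l in Hq by lra.
    lra.
  - destruct (Req_dec B 0) as [-> | HB]; [lra|].
    specialize (Hq ((C + 1) / (2 * B))).
    replace (0 * ((C + 1) / (2 * B)) ^ 2 - 2 * B * ((C + 1) / (2 * B)) + C) with (-1)
      in Hq by (field; lra).
    lra.
Qed.

(* Cauchy-Schwarz for the complex functions g1 + i g2 and h1 + i h2. *)
Lemma RInt_Cauchy_Schwarz (g1 g2 h1 h2 G X H : R -> R) (a b : R) : a <= b ->
  (forall x, G x = g1 x ^ 2 + g2 x ^ 2) ->
  (forall x, X x = g1 x * h1 x + g2 x * h2 x) ->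
  (forall x, H x = h1 x ^ 2 + h2 x ^ 2) ->
  ex_RInt G a b -> ex_RInt X a b -> ex_RInt H a b ->
  RInt X a b ^ 2 <= RInt G a b * RInt H a b.
Proof.
  intros Hab EG EX EH IG IX IH.
  apply quadratic_nonneg_discriminant.
  { apply RInt_ge_0; auto. intros. rewrite EG. apply Rplus_le_le_0_compat; apply pow2_ge_0. }
  intros t.
  set (q := fun x => (t * g1 x - h1 x) ^ 2 + (t * g2 x - h2 x) ^ 2).
  assert (Iq : is_RInt q a b (t ^ 2 * RInt G a b + (-2 * t) * RInt X a b + 1 * RInt H a b)).
  { apply (is_RInt_lincomb3 G X H).
    - intros x. unfold q. rewrite EG, EX, EH. ring.
    - all: apply (RInt_correct (V := R_CompleteNormedModule)); auto. }
  replace (_ * t ^ 2 - _ + _) with (RInt q a b)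
    by (rewrite (is_RInt_unique _ _ _ _ Iq); simpl; ring).
  apply RInt_ge_0; auto.
  - eexists. exact Iq.
  - intros. unfold q. apply Rplus_le_le_0_compat; apply pow2_ge_0.
Qed.

Lemma pow_tangent_ge (n : nat) (s s0 : R) : 0 <= s -> 0 <= s0 ->
  s0 ^ S n + INR (S n) * s0 ^ n * (s - s0) <= s ^ S n.
Proof.
  intros hs hs0. induction n as [|n IH].
  - simpl. lra.
  - assert (E : s ^ S (S n) - s0 ^ S (S n) - INR (S (S n)) * s0 ^ S n * (s - s0)
      = s * (s ^ S n - s0 ^ S n - INR (S n) * s0 ^ n * (s - s0))
        + INR (S n) * s0 ^ n * (s - s0) ^ 2) by (rewrite S_INR; simpl; ring).
    assert (0 <= INR (S n) * s0 ^ n * (s - s0) ^ 2).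
    { apply Rmult_le_pos; [apply Rmult_le_pos; [apply pos_INR | apply pow_le; lra]|].
      apply pow2_ge_0. }
    assert (0 <= s * (s ^ S n - s0 ^ S n - INR (S n) * s0 ^ n * (s - s0)))
      by (apply Rmult_le_pos; lra).
    lra.
Qed.

Lemma is_series_ge_0 (u : nat -> R) (l : R) : is_series u l -> (forall n, 0 <= u n) -> 0 <= l.
Proof.
  intros Hu Hpos. rewrite <- (is_series_unique _ _ Hu).
  replace 0 with (Series (fun n => u n * 0))
    by (rewrite (is_series_unique _ _ (is_series_scal_r 0 _ _ Hu)); ring).
  apply Series_le; [intros; rewrite Rmult_0_r; split; [lra | auto] | eexists; eauto].
Qed.

Section NonnegPSeries.
Variable c : nat -> R.
Hypothesis c_ge_0 : forall n, 0 <= c n.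
Hypothesis c_radius : forall x, Rbar_lt (Rabs x) (CV_radius c).

Lemma is_series_PSeries_tail (x : R) :
  is_series (fun n => c (S n) * x ^ S n) (PSeries c x - c 0%nat).
Proof.
  apply (is_series_incr_1 (fun n => c n * x ^ n)).
  replace (plus _ _) with (PSeries c x) by (unfold plus; simpl; ring).
  apply is_pseries_R, PSeries_correct, CV_radius_inside, c_radius.
Qed.

Lemma PSeries_derive_ge_0 (x : R) : 0 <= x -> 0 <= PSeries (PS_derive c) x.
Proof.
  intros hx. apply (is_series_ge_0 (fun n => PS_derive c n * x ^ n)).
  - apply is_pseries_R, PSeries_correct, ex_pseries_derive, c_radius.
  - intros n. unfold PS_derive.
    apply Rmult_le_pos; [apply Rmult_le_pos; [apply pos_INR | auto] | apply pow_le; lra].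
Qed.

(* Termwise tangent-line inequality for the monomials s^(n+1), summed. *)
Lemma PSeries_tangent_ge (s0 s : R) : 0 <= s0 -> 0 <= s ->
  PSeries c s0 + PSeries (PS_derive c) s0 * (s - s0) <= PSeries c s.
Proof.
  intros hs0 hs.
  assert (HD : is_series (fun n => PS_derive c n * s0 ^ n) (PSeries (PS_derive c) s0))
    by apply is_pseries_R, PSeries_correct, ex_pseries_derive, c_radius.
  pose proof (is_series_minus _ _ _ _
    (is_series_minus _ _ _ _ (is_series_PSeries_tail s) (is_series_PSeries_tail s0))
    (is_series_scal_r (s - s0) _ _ HD)) as H.
  apply is_series_ge_0 in H; [unfold plus, opp in H; simpl in H; lra|].
  intros n. unfold plus, opp, PS_derive; simpl.
  pose proof (pow_tangent_ge n s s0 hs hs0).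
  assert (0 <= c (S n) * (s ^ S n - (s0 ^ S n + INR (S n) * s0 ^ n * (s - s0))))
    by (apply Rmult_le_pos; [auto | lra]).
  simpl in *. lra.
Qed.

Lemma PSeries_nondecreasing (x y : R) : 0 <= x -> x <= y -> PSeries c x <= PSeries c y.
Proof.
  intros hx hxy. pose proof (PSeries_tangent_ge x y hx ltac:(lra)).
  pose proof (PSeries_derive_ge_0 x hx).
  assert (0 <= PSeries (PS_derive c) x * (y - x)) by (apply Rmult_le_pos; lra).
  lra.
Qed.

Lemma PSeries_convex (x y t : R) : 0 <= x -> 0 <= y -> 0 <= t <= 1 ->
  PSeries c (t * x + (1 - t) * y) <= t * PSeries c x + (1 - t) * PSeries c y.
Proof.
  intros hx hy ht. set (z := t * x + (1 - t) * y).
  assert (hz : 0 <= z) by (unfold z; nra).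
  set (D := PSeries (PS_derive c) z).
  pose proof (PSeries_tangent_ge z x hz hx) as Hx.
  pose proof (PSeries_tangent_ge z y hz hy) as Hy. fold D in Hx, Hy.
  assert (E : t * (D * (x - z)) + (1 - t) * (D * (y - z)) = 0) by (unfold z; ring).
  apply Rmult_le_compat_l with (r := t) in Hx; [|lra].
  apply Rmult_le_compat_l with (r := 1 - t) in Hy; [|lra].
  lra.
Qed.

Lemma PSeries_Jensen (h w : R -> R) (a b : R) : a <= b ->
  (forall x, a < x < b -> 0 <= w x) -> (forall x, a < x < b -> 0 <= h x) ->
  ex_RInt w a b -> ex_RInt (fun x => h x * w x) a b ->
  ex_RInt (fun x => PSeries c (h x) * w x) a b -> RInt w a b = 1 ->
  PSeries c (RInt (fun x => h x * w x) a b) <= RInt (fun x => PSeries c (h x) * w x) a b.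
Proof.
  intros Hab Hw Hh Iw Ihw IAw Hnorm.
  set (s0 := RInt (fun x => h x * w x) a b).
  assert (hs0 : 0 <= s0).
  { apply RInt_ge_0; auto. intros. apply Rmult_le_pos; auto. }
  set (D := PSeries (PS_derive c) s0).
  set (l := fun x => (PSeries c s0 - D * s0) * w x + D * (h x * w x)).
  assert (Il : is_RInt l a b ((PSeries c s0 - D * s0) * RInt w a b + D * s0)).
  { apply (is_RInt_lincomb2 w (fun x => h x * w x)); [reflexivity | |];
      apply (RInt_correct (V := R_CompleteNormedModule)); auto. }
  replace (PSeries c s0) with (RInt l a b)
    by (rewrite (is_RInt_unique _ _ _ _ Il), Hnorm; simpl; ring).
  apply RInt_le; auto.
  - eexists. exact Il.
  - intros x Hx. unfold l.
    pose proof (PSeries_tangent_ge s0 (h x) hs0 (Hh x Hx)) as Ht. fold D in Ht.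
    replace ((PSeries c s0 - D * s0) * w x + D * (h x * w x))
      with ((PSeries c s0 + D * (h x - s0)) * w x) by ring.
    apply Rmult_le_compat_r; auto.
Qed.

End NonnegPSeries.

Section PrimitiveInverse.
Variable f : R -> R.
Hypothesis f_derivable : forall q, ex_derive f q.
Hypothesis f_pos : forall q, 0 < f q.
Hypothesis f_even : forall q, f (- q) = f q.

Lemma continuous_inv_f (q : R) : continuous (fun s => / f s) q.
Proof.
  apply (ex_derive_continuous (K := R_AbsRing) (V := R_NormedModule)).
  auto_derive. repeat split; [apply f_derivable | apply Rgt_not_eq, f_pos].
Qed.

Lemma ex_RInt_inv_f (x y : R) : ex_RInt (fun s => / f s) x y.
Proof.
  apply (ex_RInt_continuous (V := R_CompleteNormedModule)). intros; apply continuous_inv_f.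
Qed.

Lemma Pfun_RInt (q : R) : Pfun f q = RInt (fun s => / f s) 0 q.
Proof. apply Rint_RInt, ex_RInt_inv_f. Qed.

Lemma is_derive_Pfun (q : R) : is_derive (Pfun f) q (/ f q).
Proof.
  apply (is_derive_ext (fun q => RInt (fun s => / f s) 0 q)); [intros; symmetry; apply Pfun_RInt|].
  apply (is_derive_RInt (fun s => / f s) _ 0 q); [|apply continuous_inv_f].
  apply filter_forall. intros. apply (RInt_correct (V := R_CompleteNormedModule)), ex_RInt_inv_f.
Qed.

Lemma Pfun_continuity : continuity (Pfun f).
Proof.
  intros q. apply continuity_pt_filterlim.
  apply (ex_derive_continuous (K := R_AbsRing) (V := R_NormedModule)).
  eexists. apply is_derive_Pfun.
Qed.

Lemma Pfun_increasing (x y : R) : x < y -> Pfun f x < Pfun f y.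
Proof.
  intros Hxy. apply (incr_function (Pfun f) m_infty p_infty (fun q => / f q)); try easy.
  - intros q _ _. apply is_derive_Pfun.
  - intros q _ _. apply Rinv_0_lt_compat, f_pos.
Qed.

Lemma Pfun_odd (q : R) : Pfun f (- q) = - Pfun f q.
Proof.
  rewrite !Pfun_RInt.
  pose proof (RInt_comp_lin (fun s => / f s) (-1) 0 0 q (ex_RInt_inv_f _ _)) as H.
  replace (-1 * 0 + 0) with 0 in H by ring. replace (-1 * q + 0) with (- q) in H by ring.
  rewrite <- H. transitivity (RInt (fun s => opp (/ f s)) 0 q).
  - apply RInt_ext. intros s _. unfold scal, opp; simpl; unfold mult; simpl.
    replace (-1 * s + 0) with (- s) by ring. rewrite f_even. ring.
  - exact (RInt_opp _ _ _ (ex_RInt_inv_f 0 q)).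
Qed.

Lemma Pfun_inj (x y : R) : Pfun f x = Pfun f y -> x = y.
Proof.
  intros H. destruct (Rtotal_order x y) as [h | [h | h]]; auto;
    apply Pfun_increasing in h; lra.
Qed.

Lemma Pfun_pfun (k q : R) : Pfun f q = k -> Pfun f (pfun f k) = k.
Proof. intros Hq. exact (epsilon_spec (inhabits 0) (fun r => Pfun f r = k) (ex_intro _ q Hq)). Qed.

Lemma pfun_Pfun (q : R) : pfun f (Pfun f q) = q.
Proof. apply Pfun_inj, (Pfun_pfun _ q), eq_refl. Qed.

Lemma pfun_between (lb ub k : R) : lb <= ub -> Pfun f lb <= k <= Pfun f ub ->
  Pfun f (pfun f k) = k /\ lb <= pfun f k <= ub.
Proof.
  intros Hlu Hk.
  assert (HP : Pfun f lb <= Pfun f ub)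
    by (destruct Hlu as [h | <-]; [apply Rlt_le, Pfun_increasing, h | lra]).
  destruct (IVT_gen (Pfun f) lb ub k Pfun_continuity) as [q [Hq Eq]].
  { rewrite Rmin_left, Rmax_right; auto. }
  rewrite Rmin_left, Rmax_right in Hq by exact Hlu.
  rewrite <- Eq, pfun_Pfun. auto.
Qed.

(* Inverse function theorem on (Pfun lb, Pfun ub): p' = 1 / P'(p) = f(p). *)
Lemma is_derive_pfun (lb ub k : R) : lb < ub -> Pfun f lb < k < Pfun f ub ->
  is_derive (pfun f) k (f (pfun f k)).
Proof.
  intros Hlu Hk.
  assert (Hder : forall q, derivable_pt (Pfun f) q)
    by (intros q; exists (/ f q); apply is_derive_Reals, is_derive_Pfun).
  assert (Hinv : forall x, Pfun f lb <= x <= Pfun f ub -> comp (Pfun f) (pfun f) x = id x)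
    by (intros x Hx; apply (pfun_between lb ub); auto; lra).
  assert (Hcont : continuity_pt (pfun f) k).
  { apply (continuity_pt_recip_interv (Pfun f) (pfun f) lb ub Hlu
      (fun x y _ h _ => Pfun_increasing x y h)
      (fun x h1 h2 => Hinv x (conj h1 h2))
      (fun x h1 h2 => proj2 (pfun_between lb ub x (Rlt_le _ _ Hlu) (conj h1 h2)))
      (fun x _ => Pfun_continuity x) k Hk). }
  assert (Hrange : pfun f (Pfun f lb) <= pfun f k <= pfun f (Pfun f ub))
    by (rewrite !pfun_Pfun; apply (pfun_between lb ub); lra).
  pose proof (derivable_pt_lim_recip_interv (Pfun f) (pfun f) (Pfun f lb) (Pfun f ub) k
    (fun q _ => Hder q) Hcont (Pfun_increasing _ _ Hlu) Hk Hrange Hinv) as H.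
  assert (Hd : forall pr, derive_pt (Pfun f) (pfun f k) pr = / f (pfun f k))
    by (intros pr; apply derive_pt_eq_0, is_derive_Reals, is_derive_Pfun).
  pose proof (f_pos (pfun f k)).
  rewrite Hd in H. apply is_derive_Reals.
  replace (f (pfun f k)) with (1 / / f (pfun f k)) by (field; lra).
  apply H. apply Rinv_neq_0_compat. lra.
Qed.

End PrimitiveInverse.

Lemma continuity_pt_vanishing_left (g : R -> R) (x : R) : continuity_pt g x ->
  (forall y, y < x -> g y = 0) -> g x = 0.
Proof.
  intros Hc Hz. destruct (Req_dec (g x) 0) as [| Hn]; auto. exfalso.
  destruct (Hc (Rabs (g x)) (Rabs_pos_lt _ Hn)) as [d [Hd H]].
  assert (Hy : R_dist (g (x - d / 2)) (g x) < Rabs (g x)).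
  { apply H. split; [split; [exact I | lra] |].
    simpl. unfold R_dist. rewrite Rabs_left; lra. }
  unfold R_dist in Hy. rewrite Hz, Rminus_0_l, Rabs_Ropp in Hy by lra. lra.
Qed.

Lemma continuity_pt_vanishing_right (g : R -> R) (x : R) : continuity_pt g x ->
  (forall y, x < y -> g y = 0) -> g x = 0.
Proof.
  intros Hc Hz. destruct (Req_dec (g x) 0) as [| Hn]; auto. exfalso.
  destruct (Hc (Rabs (g x)) (Rabs_pos_lt _ Hn)) as [d [Hd H]].
  assert (Hy : R_dist (g (x + d / 2)) (g x) < Rabs (g x)).
  { apply H. split; [split; [exact I | lra] |].
    simpl. unfold R_dist. rewrite Rabs_right; lra. }
  unfold R_dist in Hy. rewrite Hz, Rminus_0_l, Rabs_Ropp in Hy by lra. lra.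
Qed.

Definition Delta_mult (p : R -> R) (a b : R) (u v : R -> R) : R :=
  variance a b u v (fun k => p k * u k) (fun k => p k * v k)
    (fun k => p k * (p k * u k)) (fun k => p k * (p k * v k)).

Section Uncertainty.
Variables (f p : R -> R) (Du Dv : nat -> R -> R) (lo hi : R).
Hypothesis f_derivable : forall q, ex_derive f q.
Hypothesis p_derive : forall k, lo <= k <= hi -> is_derive p k (f (p k)).
Hypothesis Du_smooth : smooth_seq Du.
Hypothesis Dv_smooth : smooth_seq Dv.
Hypothesis lo_le_hi : lo <= hi.
Hypothesis Du_lo : Du 0%nat lo = 0.
Hypothesis Dv_lo : Dv 0%nat lo = 0.
Hypothesis Du_hi : Du 0%nat hi = 0.
Hypothesis Dv_hi : Dv 0%nat hi = 0.
Hypothesis psi_unit : Rint (fun k => Du 0%nat k ^ 2 + Dv 0%nat k ^ 2) lo hi = 1.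

Local Notation u := (Du 0%nat).
Local Notation v := (Dv 0%nat).

Lemma ex_derive_Du (n : nat) (x : R) : ex_derive (Du n) x.
Proof. exists (Du (S n) x). apply is_derive_Reals, Du_smooth. Qed.

Lemma ex_derive_Dv (n : nat) (x : R) : ex_derive (Dv n) x.
Proof. exists (Dv (S n) x). apply is_derive_Reals, Dv_smooth. Qed.

Lemma Derive_Du (n : nat) (x : R) : Derive (fun y => Du n y) x = Du (S n) x.
Proof. apply is_derive_unique, is_derive_Reals, Du_smooth. Qed.

Lemma Derive_Dv (n : nat) (x : R) : Derive (fun y => Dv n y) x = Dv (S n) x.
Proof. apply is_derive_unique, is_derive_Reals, Dv_smooth. Qed.

Lemma Derive_p (x : R) : lo <= x <= hi -> Derive (fun y => p y) x = f (p x).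
Proof. intros Hx. apply is_derive_unique, p_derive, Hx. Qed.

Ltac ex_derive_leaf :=
  match goal with
  | |- ex_derive (fun x => Du _ x) _ => apply ex_derive_Du
  | |- ex_derive (fun x => Dv _ x) _ => apply ex_derive_Dv
  | |- ex_derive (fun x => f x) _ => apply f_derivable
  | |- ex_derive (fun x => p x) _ => eexists; apply p_derive; lra
  | |- True => exact I
  end.
Ltac solve_ex_derive := repeat match goal with |- _ /\ _ => split end; ex_derive_leaf.
Ltac solve_continuous :=
  apply (ex_derive_continuous (K := R_AbsRing) (V := R_NormedModule));
  auto_derive; solve_ex_derive.
Ltac solve_ex_RInt :=
  apply (ex_RInt_continuous (V := R_CompleteNormedModule));
  let z := fresh "z" in let Hz := fresh "Hz" in
  intros z Hz; rewrite Rmin_left, Rmax_right in Hz by exact lo_le_hi; solve_continuous.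
Ltac solve_is_derive :=
  auto_derive; [solve_ex_derive | rewrite ?Derive_Du, ?Derive_Dv, ?Derive_p by lra].

Lemma RInt_density : RInt (fun k => u k ^ 2 + v k ^ 2) lo hi = 1 :> R.
Proof. rewrite <- psi_unit. symmetry. apply Rint_RInt. solve_ex_RInt. Qed.

Lemma RInt_psi_dpsi : RInt (fun k => u k * Du 1%nat k + v k * Dv 1%nat k) lo hi = 0 :> R.
Proof.
  rewrite (RInt_derive_boundary (fun k => (u k ^ 2 + v k ^ 2) / 2)); auto.
  - cbv beta. rewrite Du_lo, Dv_lo, Du_hi, Dv_hi. field.
  - intros x Hx. solve_is_derive. field.
  - intros x Hx. solve_continuous.
Qed.

Lemma RInt_psi_x2psi :
  RInt (fun k => u k * - Du 2%nat k + v k * - Dv 2%nat k) lo hi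
  = RInt (fun k => Du 1%nat k ^ 2 + Dv 1%nat k ^ 2) lo hi :> R.
Proof.
  assert (H : RInt (fun k => Du 1%nat k ^ 2 + Dv 1%nat k ^ 2
                              - (u k * - Du 2%nat k + v k * - Dv 2%nat k)) lo hi = 0 :> R).
  { rewrite (RInt_derive_boundary (fun k => u k * Du 1%nat k + v k * Dv 1%nat k)); auto.
    - cbv beta. rewrite Du_lo, Dv_lo, Du_hi, Dv_hi. ring.
    - intros x Hx. solve_is_derive. ring.
    - intros x Hx. solve_continuous. }
  rewrite (RInt_lincomb2 (fun k => Du 1%nat k ^ 2 + Dv 1%nat k ^ 2)
    (fun k => u k * - Du 2%nat k + v k * - Dv 2%nat k) _ lo hi 1 (-1)) in H;
    [lra | intros; ring | solve_ex_RInt | solve_ex_RInt].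
Qed.

Lemma RInt_p_psi_dpsi :
  RInt (fun k => p k * (u k * Du 1%nat k + v k * Dv 1%nat k)) lo hi
  = - / 2 * RInt (fun k => f (p k) * (u k ^ 2 + v k ^ 2)) lo hi :> R.
Proof.
  assert (H : RInt (fun k => f (p k) * (u k ^ 2 + v k ^ 2)
                + 2 * (p k * (u k * Du 1%nat k + v k * Dv 1%nat k))) lo hi = 0 :> R).
  { rewrite (RInt_derive_boundary (fun k => p k * (u k ^ 2 + v k ^ 2))); auto.
    - cbv beta. rewrite Du_lo, Dv_lo, Du_hi, Dv_hi. ring.
    - intros x Hx. solve_is_derive. ring.
    - intros x Hx. solve_continuous. }
  rewrite (RInt_lincomb2 (fun k => f (p k) * (u k ^ 2 + v k ^ 2))
    (fun k => p k * (u k * Du 1%nat k + v k * Dv 1%nat k)) _ lo hi 1 2) in H;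
    [lra | intros; ring | solve_ex_RInt | solve_ex_RInt].
Qed.

Let J := RInt (fun k => v k * Du 1%nat k - u k * Dv 1%nat k) lo hi.
Let m := RInt (fun k => p k * (u k ^ 2 + v k ^ 2)) lo hi.

(* <psi, x psi> = J, so x - J applied to psi is i (psi' + i J psi). *)
Lemma Delta_x_eq : Delta_x lo hi Du Dv
  = RInt (fun k => (Du 1%nat k - J * v k) ^ 2 + (Dv 1%nat k + J * u k) ^ 2) lo hi :> R.
Proof.
  unfold Delta_x, variance, inner_re, inner_im. cbv beta.
  rewrite !Rint_RInt by solve_ex_RInt.
  rewrite RInt_psi_x2psi.
  rewrite (RInt_ext (fun k => u k * - Dv 1%nat k + v k * Du 1%nat k)
    (fun k => v k * Du 1%nat k - u k * Dv 1%nat k)) by (intros; simpl; ring).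
  rewrite (RInt_ext (fun k => u k * Du 1%nat k - v k * - Dv 1%nat k)
    (fun k => u k * Du 1%nat k + v k * Dv 1%nat k)) by (intros; simpl; ring).
  rewrite RInt_psi_dpsi. fold J.
  rewrite (RInt_lincomb3 (fun k => Du 1%nat k ^ 2 + Dv 1%nat k ^ 2)
    (fun k => v k * Du 1%nat k - u k * Dv 1%nat k) (fun k => u k ^ 2 + v k ^ 2)
    (fun k => (Du 1%nat k - J * v k) ^ 2 + (Dv 1%nat k + J * u k) ^ 2) lo hi
    1 (-2 * J) (J ^ 2)); [| intros; ring | solve_ex_RInt | solve_ex_RInt | solve_ex_RInt].
  fold J. rewrite RInt_density. ring.
Qed.

Lemma Delta_mult_eq : Delta_mult p lo hi u v
  = RInt (fun k => p k ^ 2 * (u k ^ 2 + v k ^ 2)) lo hi - m ^ 2 :> R.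
Proof.
  unfold Delta_mult, variance, inner_re, inner_im. cbv beta.
  rewrite !Rint_RInt by solve_ex_RInt.
  rewrite (RInt_ext (fun k => u k * (p k * (p k * u k)) + v k * (p k * (p k * v k)))
    (fun k => p k ^ 2 * (u k ^ 2 + v k ^ 2))) by (intros; simpl; ring).
  rewrite (RInt_ext (fun k => u k * (p k * u k) + v k * (p k * v k))
    (fun k => p k * (u k ^ 2 + v k ^ 2))) by (intros; simpl; ring).
  rewrite (RInt_ext (fun k => u k * (p k * v k) - v k * (p k * u k)) (fun _ => 0))
    by (intros; simpl; ring).
  rewrite RInt_const. fold m. unfold scal; simpl; unfold mult; simpl. ring.
Qed.

Lemma RInt_centered_sq : RInt (fun k => (p k - m) ^ 2 * (u k ^ 2 + v k ^ 2)) lo hi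
  = RInt (fun k => p k ^ 2 * (u k ^ 2 + v k ^ 2)) lo hi - m ^ 2 :> R.
Proof.
  rewrite (RInt_lincomb3 (fun k => p k ^ 2 * (u k ^ 2 + v k ^ 2))
    (fun k => p k * (u k ^ 2 + v k ^ 2)) (fun k => u k ^ 2 + v k ^ 2)
    (fun k => (p k - m) ^ 2 * (u k ^ 2 + v k ^ 2)) lo hi 1 (-2 * m) (m ^ 2));
    [| intros; ring | solve_ex_RInt | solve_ex_RInt | solve_ex_RInt].
  fold m. rewrite RInt_density. ring.
Qed.

(* Cauchy-Schwarz between (p - m) psi and psi' + i J psi; the cross term is
   -<[x, p]>/2 = -<f(p)>/2 by integration by parts. *)
Lemma Robertson_uncertainty : Delta_x lo hi Du Dv * Delta_mult p lo hi u v
  >= / 4 * RInt (fun k => f (p k) * (u k ^ 2 + v k ^ 2)) lo hi ^ 2.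
Proof.
  assert (CS : RInt (fun k => (p k - m) * (u k * Du 1%nat k + v k * Dv 1%nat k)) lo hi ^ 2
    <= RInt (fun k => (p k - m) ^ 2 * (u k ^ 2 + v k ^ 2)) lo hi
       * RInt (fun k => (Du 1%nat k - J * v k) ^ 2 + (Dv 1%nat k + J * u k) ^ 2) lo hi).
  { apply (RInt_Cauchy_Schwarz (fun k => (p k - m) * u k) (fun k => (p k - m) * v k)
      (fun k => Du 1%nat k - J * v k) (fun k => Dv 1%nat k + J * u k)); auto;
      try (intros; ring); solve_ex_RInt. }
  rewrite (RInt_lincomb2 (fun k => p k * (u k * Du 1%nat k + v k * Dv 1%nat k))
    (fun k => u k * Du 1%nat k + v k * Dv 1%nat k) _ lo hi 1 (- m)) in CS;
    [| intros; ring | solve_ex_RInt | solve_ex_RInt].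
  rewrite RInt_p_psi_dpsi, RInt_psi_dpsi, <- Delta_x_eq, RInt_centered_sq,
    <- Delta_mult_eq in CS.
  nra.
Qed.

Lemma Delta_mult_ge_0 : 0 <= Delta_mult p lo hi u v.
Proof.
  rewrite Delta_mult_eq, <- RInt_centered_sq.
  apply RInt_ge_0; [exact lo_le_hi | solve_ex_RInt |].
  intros. apply Rmult_le_pos; [apply pow2_ge_0 | nra].
Qed.

Lemma PSeries_Delta_mult_le (c : nat -> R) : (forall n, 0 <= c n) ->
  (forall x, Rbar_lt (Rabs x) (CV_radius c)) -> (forall q, f q = PSeries c (q ^ 2)) ->
  PSeries c (Delta_mult p lo hi u v) <= RInt (fun k => f (p k) * (u k ^ 2 + v k ^ 2)) lo hi.
Proof.
  intros c_ge_0 c_radius f_eq.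
  assert (If : ex_RInt (fun k => f (p k) * (u k ^ 2 + v k ^ 2)) lo hi) by solve_ex_RInt.
  apply Rle_trans with (PSeries c (RInt (fun k => p k ^ 2 * (u k ^ 2 + v k ^ 2)) lo hi)).
  - apply PSeries_nondecreasing; auto; [apply Delta_mult_ge_0 |].
    rewrite Delta_mult_eq. pose proof (pow2_ge_0 m). lra.
  - rewrite (RInt_ext (fun k => f (p k) * (u k ^ 2 + v k ^ 2))
      (fun k => PSeries c (p k ^ 2) * (u k ^ 2 + v k ^ 2))) by (intros; rewrite f_eq; reflexivity).
    apply PSeries_Jensen; auto.
    + intros. nra.
    + intros. apply pow2_ge_0.
    + solve_ex_RInt.
    + solve_ex_RInt.
    + apply (ex_RInt_ext (fun k => f (p k) * (u k ^ 2 + v k ^ 2))); auto.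
      intros. rewrite f_eq. reflexivity.
    + apply RInt_density.
Qed.

End Uncertainty.

Lemma smooth_seq_support_boundary (D : nat -> R -> R) (lo hi : R) : smooth_seq D ->
  (forall k, (k < lo \/ hi < k) -> D 0%nat k = 0) -> D 0%nat lo = 0 /\ D 0%nat hi = 0.
Proof.
  intros HD Hsupp.
  assert (Hc : forall x, continuity_pt (D 0%nat) x)
    by (intros x; apply derivable_continuous_pt; exists (D 1%nat x); apply HD).
  split; [apply continuity_pt_vanishing_left | apply continuity_pt_vanishing_right]; auto.
Qed.

(* g(s) = sum_n gcoef a n * s^n for s >= 0. *)
Definition gcoef (a : nat -> R) (n : nat) : R :=
  match n with O => 1 | S _ => a n end.

Section EvenSeries.
Variables (a : nat -> R) (f : R -> R).
Hypothesis a_ge_0 : forall n, (1 <= n)%nat -> 0 <= a n.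
Hypothesis f_series : forall p, infinite_sum (fun n => a (S n) * p ^ (2 * S n)) (f p - 1).

Lemma gcoef_ge_0 (n : nat) : 0 <= gcoef a n.
Proof. destruct n; simpl; [lra | apply a_ge_0; auto with arith]. Qed.

Lemma is_series_gcoef (p : R) : is_series (fun n => gcoef a n * (p ^ 2) ^ n) (f p).
Proof.
  apply is_series_decr_1.
  replace (plus _ _) with (f p - 1) by (unfold plus, opp; simpl; ring).
  apply (is_series_ext (fun n => a (S n) * p ^ (2 * S n))).
  - intros n. simpl gcoef. rewrite pow_mult. reflexivity.
  - apply is_series_Reals, f_series.
Qed.

Lemma gcoef_radius (x : R) : Rbar_lt (Rabs x) (CV_radius (gcoef a)).
Proof.
  apply Rbar_lt_le_trans with (Rabs x + 1); [simpl; lra |].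
  apply Lub_Rbar_correct. exists (f (sqrt (Rabs x + 1))).
  apply (is_series_ext (fun n => gcoef a n * (sqrt (Rabs x + 1) ^ 2) ^ n));
    [| apply is_series_gcoef].
  intros n. rewrite pow2_sqrt by (pose proof (Rabs_pos x); lra).
  rewrite Rabs_mult, <- RPow_abs, (Rabs_pos_eq (gcoef a n)) by apply gcoef_ge_0.
  rewrite (Rabs_pos_eq (Rabs x + 1)) by (pose proof (Rabs_pos x); lra). reflexivity.
Qed.

Lemma f_PSeries (p : R) : f p = PSeries (gcoef a) (p ^ 2).
Proof. symmetry. apply is_pseries_unique, is_pseries_R, is_series_gcoef. Qed.

Lemma gfun_PSeries (s : R) : gfun f s = PSeries (gcoef a) (Rabs s).
Proof. unfold gfun. rewrite f_PSeries, pow2_sqrt by apply Rabs_pos. reflexivity. Qed.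

Lemma f_ge_1 (p : R) : 1 <= f p.
Proof.
  rewrite f_PSeries, <- (PSeries_0 (gcoef a)) at 1.
  apply PSeries_nondecreasing; [apply gcoef_ge_0 | apply gcoef_radius | lra | apply pow2_ge_0].
Qed.

Lemma f_even (p : R) : f (- p) = f p.
Proof. rewrite !f_PSeries. f_equal. ring. Qed.

Lemma f_derivable (p : R) : ex_derive f p.
Proof.
  apply (ex_derive_ext (fun q => PSeries (gcoef a) (q ^ 2))); [intros; symmetry; apply f_PSeries |].
  apply ex_derive_comp; [| auto_derive; exact I].
  eexists. apply is_derive_PSeries, gcoef_radius.
Qed.

Lemma f_pos (p : R) : 0 < f p.
Proof. pose proof (f_ge_1 p). lra. Qed.

Lemma is_derive_pfun_kmax (lo hi : R) : lt_kmax f hi -> lt_kmax f (- lo) ->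
  forall k, lo <= k <= hi -> is_derive (pfun f) k (f (pfun f k)).
Proof.
  intros [ub Hub] [q Hq] k Hk.
  assert (Hlb : Pfun f (- q) < lo)
    by (rewrite Pfun_odd; auto using f_derivable, f_pos, f_even; lra).
  assert (Hlu : - q < ub).
  { destruct (Rlt_le_dec (- q) ub) as [h | [h | h]]; auto.
    - apply (Pfun_increasing f f_derivable f_pos) in h. lra.
    - rewrite h in Hub. lra. }
  apply (is_derive_pfun f f_derivable f_pos (- q) ub); auto; lra.
Qed.

Lemma gfun_uncertainty (Du Dv : nat -> R -> R) (lo hi : R) :
  smooth_seq Du -> smooth_seq Dv -> lo <= hi -> lt_kmax f hi -> lt_kmax f (- lo) ->
  (forall k, (k < lo \/ hi < k) -> Du 0%nat k = 0 /\ Dv 0%nat k = 0) ->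
  Rint (fun k => Du 0%nat k ^ 2 + Dv 0%nat k ^ 2) lo hi = 1 ->
  Delta_x lo hi Du Dv * Delta_p f lo hi (Du 0%nat) (Dv 0%nat)
    >= / 4 * gfun f (Delta_p f lo hi (Du 0%nat) (Dv 0%nat)) ^ 2.
Proof.
  intros Du_smooth Dv_smooth Hlh Hhi Hlo Hsupp Hunit.
  pose proof (is_derive_pfun_kmax lo hi Hhi Hlo) as p_derive.
  destruct (smooth_seq_support_boundary Du lo hi Du_smooth (fun k Hk => proj1 (Hsupp k Hk)))
    as [Du_lo Du_hi].
  destruct (smooth_seq_support_boundary Dv lo hi Dv_smooth (fun k Hk => proj2 (Hsupp k Hk)))
    as [Dv_lo Dv_hi].
  pose proof (Robertson_uncertainty f (pfun f) Du Dv lo hi f_derivable p_derive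
    Du_smooth Dv_smooth Hlh Du_lo Dv_lo Du_hi Dv_hi Hunit) as Hrob.
  pose proof (PSeries_Delta_mult_le f (pfun f) Du Dv lo hi f_derivable p_derive
    Du_smooth Dv_smooth Hlh Hunit (gcoef a) gcoef_ge_0 gcoef_radius f_PSeries) as Hjensen.
  pose proof (Delta_mult_ge_0 f (pfun f) Du Dv lo hi p_derive
    Du_smooth Dv_smooth Hlh Hunit) as Hpos.
  change (Delta_p f lo hi (Du 0%nat) (Dv 0%nat))
    with (Delta_mult (pfun f) lo hi (Du 0%nat) (Dv 0%nat)).
  assert (Hg1 : 1 <= gfun f (Delta_mult (pfun f) lo hi (Du 0%nat) (Dv 0%nat)))
    by apply f_ge_1.
  rewrite gfun_PSeries, Rabs_pos_eq in Hg1 |- * by exact Hpos.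
  nra.
Qed.

End EvenSeries.

Theorem mainTheorem7
  (a : nat -> R) (f : R -> R)
  (ha : forall n, (1 <= n)%nat -> 0 <= a n)
  (hf : forall p, infinite_sum (fun n => a (S n) * p ^ (2 * S n)) (f p - 1)) :
  (* g is convex on [0, oo) *)
  (forall x y t, 0 <= x -> 0 <= y -> 0 <= t <= 1 ->
     gfun f (t * x + (1 - t) * y) <= t * gfun f x + (1 - t) * gfun f y) /\
  (* g is nondecreasing on [0, oo) *)
  (forall x y, 0 <= x -> x <= y -> gfun f x <= gfun f y) /\
  (* g(p^2) = f(p) *)
  (forall p, gfun f (p ^ 2) = f p) /\
  (* uncertainty relation for unit psi = u + i v in C_c^oo((-kmax, kmax)),
     supported in [lo, hi] with -kmax < lo <= hi < kmax *)
  (forall (Du Dv : nat -> R -> R) (lo hi : R),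
     smooth_seq Du -> smooth_seq Dv ->
     lo <= hi -> lt_kmax f hi -> lt_kmax f (- lo) ->
     (forall k, (k < lo \/ hi < k) -> Du 0%nat k = 0 /\ Dv 0%nat k = 0) ->
     Rint (fun k => Du 0%nat k ^ 2 + Dv 0%nat k ^ 2) lo hi = 1 ->
     Delta_x lo hi Du Dv * Delta_p f lo hi (Du 0%nat) (Dv 0%nat)
       >= / 4 * gfun f (Delta_p f lo hi (Du 0%nat) (Dv 0%nat)) ^ 2).
Proof.
  pose proof (gcoef_ge_0 a ha) as c_ge_0.
  pose proof (gcoef_radius a f ha hf) as c_radius.
  pose proof (gfun_PSeries a f hf) as Hg.
  split; [| split; [| split]].
  - intros x y t hx hy ht.
    rewrite !Hg, !Rabs_pos_eq by nra.
    apply PSeries_convex; auto.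
  - intros x y hx hxy. rewrite !Hg, !Rabs_pos_eq by lra.
    apply PSeries_nondecreasing; auto.
  - intros p. rewrite Hg, Rabs_pos_eq by apply pow2_ge_0. symmetry. apply (f_PSeries a f hf).
  - exact (gfun_uncertainty a f ha hf).
Qed.
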